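(* For all real $a,b$, $$|\Phi(a)-\Phi(b)|\ge|a-b|\sqrt{\varphi(a)\varphi(b)},$$ where $\varphi(x)=\frac{1}{\sqrt{2\pi}}e^{-x^2/2}$ and $\Phi(x)=\int_{-\infty}^x\varphi(t)\,dt$. *)

From Stdlib Require Import Reals ClassicalEpsilon.
Open Scope R_scope.

Definition phi (x : R) : R := / sqrt (2 * PI) * exp (- (x ^ 2) / 2).

(* l is the improper integral \int_{-oo}^x phi(t) dt, i.e. the limit as
   m -> +oo of the Riemann integral of phi over [-m, x]. *)
Definition Phi_is_limit (x l : R) : Prop :=
  forall eps : R, eps > 0 ->
    exists M : R, forall m : R, m >= M ->
      forall pr : Riemann_integrable phi (- m) x,
        Rabs (RiemannInt pr - l) < eps.

Definition Phi (x : R) : R := epsilon (inhabits 0) (Phi_is_limit x).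

From Stdlib Require Import Reals Lra ClassicalEpsilon.
From Coquelicot Require Import Coquelicot.
Open Scope R_scope.

(* For b <= a the improper integrals defining Phi differ by the
   proper integral of phi over [b, a].  The Gaussian density is log-concave in
   the two-point form  phi a * phi b <= phi t * phi (a + b - t)  for t in
   [b, a], since  t^2 + (a + b - t)^2 = a^2 + b^2 - 2 (a - t) (t - b).
   By AM-GM, 2 sqrt (phi a phi b) <= phi t + phi (a + b - t); integrating over
   [b, a], and using that the reflection t |-> a + b - t preserves the
   integral, gives  (a - b) sqrt (phi a phi b) <= int_b^a phi. *)

Lemma sqrt_mult_le_half_sum (x y : R) :
  0 <= x -> 0 <= y -> 2 * sqrt (x * y) <= x + y.
Proof.
  intros Hx Hy. rewrite sqrt_mult by assumption.
  pose proof (sqrt_sqrt x Hx). pose proof (sqrt_sqrt y Hy).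
  pose proof (pow2_ge_0 (sqrt x - sqrt y)). simpl in *. nra.
Qed.

Lemma exp_le_compat (x y : R) : x <= y -> exp x <= exp y.
Proof.
  intros [Hlt | ->]; [left; apply exp_increasing, Hlt | right; reflexivity].
Qed.

Lemma continuous_of_ex_derive (f : R -> R) (x : R) :
  ex_derive f x -> continuous f x.
Proof. apply (@ex_derive_continuous R_AbsRing R_NormedModule). Qed.

Section ContinuousIntegrals.

Variable f : R -> R.
Hypothesis f_cont : forall x, continuous f x.

Lemma ex_RInt_cont (u v : R) : ex_RInt f u v.
Proof. apply (@ex_RInt_continuous R_CompleteNormedModule); auto. Qed.

Lemma RInt_Chasles_cont (u v w : R) : RInt f u v + RInt f v w = RInt f u w.
Proof. apply (RInt_Chasles f u v w); apply ex_RInt_cont. Qed.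

Lemma RInt_nonneg_cont (u v : R) :
  (forall t, 0 <= f t) -> u <= v -> 0 <= RInt f u v.
Proof. intros Hf Huv. apply RInt_ge_0; auto using ex_RInt_cont. Qed.

Lemma ex_RInt_reflect (a b u v : R) : ex_RInt (fun t => f (a + b - t)) u v.
Proof.
  apply (@ex_RInt_continuous R_CompleteNormedModule). intros t _.
  apply (continuous_comp (fun s => a + b - s) f); [|apply f_cont].
  apply continuous_of_ex_derive. auto_derive. auto.
Qed.

Lemma RInt_reflect (a b : R) :
  RInt (fun t => f (a + b - t)) b a = RInt f b a.
Proof.
  pose proof (RInt_comp_lin f (-1) (a + b) b a) as Hlin.
  replace (-1 * b + (a + b)) with a in Hlin by ring.
  replace (-1 * a + (a + b)) with b in Hlin by ring.
  rewrite <- (opp_RInt_swap f a b) by apply ex_RInt_cont.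
  rewrite <- Hlin by apply ex_RInt_cont.
  rewrite (RInt_ext (fun s => scal (-1) (f (-1 * s + (a + b))))
                   (fun s => scal (-1) (f (a + b - s)))); cycle 1.
  { intros t _. now replace (-1 * t + (a + b)) with (a + b - t) by ring. }
  rewrite (RInt_scal _ _ _ _ (ex_RInt_reflect a b b a)).
  unfold scal, opp; simpl; unfold mult; simpl. lra.
Qed.

Lemma RInt_two_point_lower_bound (a b : R) :
  (forall t, 0 < f t) ->
  (forall t, b <= t <= a -> f a * f b <= f t * f (a + b - t)) ->
  b <= a -> (a - b) * sqrt (f a * f b) <= RInt f b a.
Proof.
  intros Hpos Htwo Hba.
  set (c := sqrt (f a * f b)).
  assert (Hpoint : forall t, b < t < a -> 2 * c <= f t + f (a + b - t)).
  { intros t Ht. apply Rle_trans with (2 * sqrt (f t * f (a + b - t))).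
    - apply Rmult_le_compat_l; [lra|]. apply sqrt_le_1_alt, Htwo. lra.
    - apply sqrt_mult_le_half_sum; left; apply Hpos. }
  pose proof (ex_RInt_reflect a b b a) as Hex_refl.
  assert (Hint : RInt (fun _ => 2 * c) b a
                 <= RInt (fun t => f t + f (a + b - t)) b a).
  { apply RInt_le; auto.
    - exact (@ex_RInt_const R_CompleteNormedModule b a _).
    - exact (@ex_RInt_plus R_CompleteNormedModule _ _ b a (ex_RInt_cont b a) Hex_refl). }
  assert (Hconst : RInt (fun _ => 2 * c) b a = (a - b) * (2 * c))
    by exact (@RInt_const R_CompleteNormedModule b a _).
  assert (Hsum : RInt (fun t => f t + f (a + b - t)) b a
                 = RInt f b a + RInt (fun t => f (a + b - t)) b a)
    by exact (@RInt_plus R_CompleteNormedModule _ _ b a (ex_RInt_cont b a) Hex_refl).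
  rewrite Hconst, Hsum, RInt_reflect in Hint. lra.
Qed.

End ContinuousIntegrals.

Definition gauss_const : R := / sqrt (2 * PI).

Lemma gauss_const_pos : 0 < gauss_const.
Proof.
  apply Rinv_0_lt_compat, sqrt_lt_R0. pose proof PI_RGT_0. lra.
Qed.

Lemma phi_pos (x : R) : 0 < phi x.
Proof. apply Rmult_lt_0_compat; [apply gauss_const_pos | apply exp_pos]. Qed.

Lemma phi_cont (x : R) : continuous phi x.
Proof. apply continuous_of_ex_derive. unfold phi. auto_derive. auto. Qed.

Lemma gauss_exponent_two_point (a b t : R) :
  b <= t <= a -> t ^ 2 + (a + b - t) ^ 2 <= a ^ 2 + b ^ 2.
Proof.
  intros Ht.
  assert (Hprod : 0 <= (a - t) * (t - b)) by (apply Rmult_le_pos; lra).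
  replace (a ^ 2 + b ^ 2) with (t ^ 2 + (a + b - t) ^ 2 + 2 * ((a - t) * (t - b)))
    by ring.
  lra.
Qed.

Lemma phi_mult (x y : R) :
  phi x * phi y = gauss_const ^ 2 * exp (- (x ^ 2 + y ^ 2) / 2).
Proof.
  unfold phi. fold gauss_const.
  replace (- (x ^ 2 + y ^ 2) / 2) with (- (x ^ 2) / 2 + - (y ^ 2) / 2) by field.
  rewrite exp_plus. ring.
Qed.

Lemma phi_two_point (a b t : R) :
  b <= t <= a -> phi a * phi b <= phi t * phi (a + b - t).
Proof.
  intros Ht. rewrite !phi_mult.
  apply Rmult_le_compat_l; [apply pow2_ge_0|].
  apply exp_le_compat. pose proof (gauss_exponent_two_point a b t Ht). lra.
Qed.

(* Exponential left tail bound, from -t^2/2 <= 1/2 + t. *)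
Definition tail_const : R := gauss_const * exp (/ 2).

Lemma phi_le_exp (t : R) : phi t <= tail_const * exp t.
Proof.
  unfold phi, tail_const. fold gauss_const. rewrite Rmult_assoc, <- exp_plus.
  apply Rmult_le_compat_l; [left; apply gauss_const_pos|].
  apply exp_le_compat. pose proof (pow2_ge_0 (t + 1)). simpl in *. lra.
Qed.

(* Partial integrals of phi up to x are bounded independently of the lower
   endpoint; this is what makes the improper integral Phi converge. *)
Lemma RInt_phi_bound (u x : R) : RInt phi u x <= tail_const * exp x.
Proof.
  assert (Hk : 0 < tail_const)
    by (apply Rmult_lt_0_compat; [apply gauss_const_pos | apply exp_pos]).
  destruct (Rle_or_lt u x) as [Hux | Hxu].
  - assert (Hexp : is_RInt (fun t => tail_const * exp t) u x
                     (tail_const * exp x - tail_const * exp u)).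
    { apply (is_RInt_derive (fun t => tail_const * exp t)).
      - intros. auto_derive; auto. ring.
      - intros. apply continuous_of_ex_derive. auto_derive. auto. }
    apply Rle_trans with (RInt (fun t => tail_const * exp t) u x).
    + apply RInt_le; auto.
      * apply ex_RInt_cont, phi_cont.
      * eexists; eauto.
      * intros; apply phi_le_exp.
    + rewrite (is_RInt_unique _ _ _ _ Hexp). pose proof (exp_pos u). nra.
  - pose proof (RInt_nonneg_cont phi phi_cont x u (fun t => Rlt_le _ _ (phi_pos t))
                  (Rlt_le _ _ Hxu)).
    pose proof (RInt_Chasles_cont phi phi_cont u x u) as Hch.
    rewrite RInt_point in Hch. unfold zero in Hch; simpl in Hch.
    pose proof (exp_pos x). nra.
Qed.

(* The improper integral converges: its value is the supremum of the partial
   integrals over [-m, x], which increase with m. *)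
Lemma Phi_exists (x : R) : exists l, Phi_is_limit x l.
Proof.
  set (E := fun y => exists m, y = RInt phi (- m) x).
  assert (Hbound : bound E)
    by (exists (tail_const * exp x); intros y [m ->]; apply RInt_phi_bound).
  assert (Hne : exists y, E y) by (exists (RInt phi (- 0) x); exists 0; auto).
  destruct (completeness E Hbound Hne) as [L [HLub HLleast]].
  exists L. intros eps Heps.
  assert (Hclose : exists m0, RInt phi (- m0) x > L - eps).
  { apply NNPP. intro Hn. assert (L <= L - eps); [|lra].
    apply HLleast. intros y [m ->].
    apply Rnot_lt_le. intro Hlt. apply Hn. exists m. lra. }
  destruct Hclose as [m0 Hm0].
  exists m0. intros m Hm pr.
  rewrite <- (RInt_Reals phi (- m) x pr).
  assert (RInt phi (- m) x <= L) by (apply HLub; exists m; auto).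
  pose proof (RInt_Chasles_cont phi phi_cont (- m) (- m0) x).
  pose proof (RInt_nonneg_cont phi phi_cont (- m) (- m0)
                (fun t => Rlt_le _ _ (phi_pos t)) ltac:(lra)).
  apply Rabs_def1; lra.
Qed.

Lemma Phi_spec (x : R) : Phi_is_limit x (Phi x).
Proof. unfold Phi. apply epsilon_spec, Phi_exists. Qed.

Lemma Phi_diff (a b : R) : Phi a - Phi b = RInt phi b a.
Proof.
  apply NNPP; intro Hneq.
  set (d := Rabs (Phi a - Phi b - RInt phi b a)).
  assert (Hd : d > 0) by (apply Rabs_pos_lt; lra).
  destruct (Phi_spec a (d / 2) ltac:(lra)) as [Ma Ha].
  destruct (Phi_spec b (d / 2) ltac:(lra)) as [Mb Hb].
  set (m := Rmax Ma Mb).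
  specialize (Ha m (Rle_ge _ _ (Rmax_l _ _))
                (ex_RInt_Reals_0 _ _ _ (ex_RInt_cont phi phi_cont _ _))).
  specialize (Hb m (Rle_ge _ _ (Rmax_r _ _))
                (ex_RInt_Reals_0 _ _ _ (ex_RInt_cont phi phi_cont _ _))).
  rewrite <- RInt_Reals in Ha, Hb.
  pose proof (RInt_Chasles_cont phi phi_cont (- m) b a).
  unfold d in *. revert Ha Hb. unfold Rabs; repeat destruct Rcase_abs; lra.
Qed.

Lemma Phi_increment_lower_bound (a b : R) :
  b <= a -> Rabs (Phi a - Phi b) >= Rabs (a - b) * sqrt (phi a * phi b).
Proof.
  intros Hba. rewrite Phi_diff.
  pose proof (RInt_two_point_lower_bound phi phi_cont a b phi_pos
                (phi_two_point a b) Hba).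
  pose proof (RInt_nonneg_cont phi phi_cont b a
                (fun t => Rlt_le _ _ (phi_pos t)) Hba).
  rewrite !Rabs_right by lra. lra.
Qed.

Theorem mainTheorem13 (a b : R) :
  Rabs (Phi a - Phi b) >= Rabs (a - b) * sqrt (phi a * phi b).
Proof.
  destruct (Rle_or_lt b a) as [Hba | Hab].
  - apply Phi_increment_lower_bound, Hba.
  - rewrite Rabs_minus_sym, (Rabs_minus_sym a b), (Rmult_comm (phi a)).
    apply Phi_increment_lower_bound. lra.
Qed.
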